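(* Let $D$ be a Dyck path in the $n\times n$ lattice square and write the expansion of $LLT_D[X;1+q]$ in the elementary basis as $LLT_D[X;1+q]=\sum_{\mu\vdash n}P_\mu(q)\,e_\mu[X]$. Then $$\sum_{\mu\vdash n}P_\mu(q)=(1+q)^{\mathrm{dinv}(D)}.$$
   Context: A Dyck path $D$ in the $n\times n$ lattice square goes from $(0,0)$ to $(n,n)$ by unit North and East steps and stays weakly above the diagonal $y=x$. For $i=1,\dots,n$, let $a_i$ be the number of full lattice cells in row $i$ strictly between $D$ and the diagonal. A parking function $PF$ supported by $D$ is a bijective labeling of the $n$ cells immediately to the right of the North steps of $D$ by ''cars'' $1,\dots,n$, such that labels increase from bottom to top within each column. Let $c_i$ be the car in row $i$; it lies on diagonal $a_i$. A pair of rows $i<j$ contributes a primary dinv if $a_i=a_j$ and $c_i<c_j$, and a secondary dinv if $a_i=a_j+1$ and $c_i>c_j$. $\mathrm{dinv}(PF)$ is the total number of primary and secondary dinvs. The word $\sigma(PF)$ is the permutation obtained by reading the cars diagonal by diagonal, from the highest diagonal to the lowest, and within each diagonal from right to left. $\mathrm{pides}(PF)$ is the composition of $n$ encoding the descent set of $\sigma(PF)^{-1}$. $F_\alpha[X]$ is Gessel's fundamental quasisymmetric function indexed by the composition $\alpha$. The LLT polynomial of $D$ is $LLT_D[X;q]=\sum_{PF}q^{\mathrm{dinv}(PF)}F_{\mathrm{pides}(PF)}[X]$, summed over all parking functions supported by $D$; it is a symmetric function. $\mathrm{dinv}(D)$ is defined as $\mathrm{dinv}(PF)$ for the parking function $PF$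 supported by $D$ with $\sigma(PF)=n\cdots321$. *)

From HB Require Import structures.
From mathcomp Require Import all_boot all_order all_algebra all_fingroup.
From mathcomp Require Import mpoly.
Set Implicit Arguments. Unset Strict Implicit. Unset Printing Implicit Defensive.
Import Order.TTheory GRing.Theory.
Local Open Scope ring_scope.

(* A lattice path from (0,0) is a word in {N = true, E = false}. *)
Definition is_dyck (n : nat) (D : seq bool) : bool :=
  [&& size D == (2 * n)%N, count id D == n &
      all (fun k => count negb (take k D) <= count id (take k D))%N
          (iota 0 (size D).+1)].

Fixpoint nxs (D : seq bool) (e : nat) : seq nat :=
  match D with
  | [::] => [::]
  | true :: D' => e :: nxs D' e
  | false :: D' => nxs D' e.+1
  end.

(* Rows are indexed 0..n-1 (row j is the paper's row j+1, between y=j and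
   y=j+1).  xcol D j = column (x-coordinate) of the North step in row j, i.e.
   the column of the cell where the car of row j sits. *)
Definition xcol (n : nat) (D : seq bool) (j : 'I_n) : nat := nth 0%N (nxs D 0) j.

Definition area (n : nat) (D : seq bool) (j : 'I_n) : nat := (j - xcol D j)%N.

(* Cars 1..n are encoded as 0..n-1 (only their relative order matters);
   s j is the car in row j. *)
Definition isPF (n : nat) (D : seq bool) (s : {perm 'I_n}) : bool :=
  [forall j : 'I_n, forall k : 'I_n,
     ((j < k)%N && (xcol D j == xcol D k)) ==> (s j < s k)%N].

Definition dinv (n : nat) (D : seq bool) (c : 'I_n -> nat) : nat :=
  #|[set jk : 'I_n * 'I_n |
      (jk.1 < jk.2)%N &&
      (((area D jk.1 == area D jk.2) && (c jk.1 < c jk.2)%N) ||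
       ((area D jk.1 == (area D jk.2).+1) && (c jk.2 < c jk.1)%N))]|.

(* Position (0-based) of the cell of row j in the reading order: diagonals
   from highest to lowest, within a diagonal from right to left.  On a fixed
   diagonal a, the cell of row j is at x = j - a, so "right to left" means
   decreasing row index. *)
Definition readpos (n : nat) (D : seq bool) (j : 'I_n) : nat :=
  #|[set k : 'I_n | (area D j < area D k)%N ||
                    ((area D k == area D j) && (j < k)%N)]|.

(* sigma(PF)^{-1}: car |-> its position in the reading word sigma(PF).
   Here sigma(PF) at position readpos D j is the car s j, so the position of
   car i is readpos D (s^-1 i). *)
Definition sigma_inv (n : nat) (D : seq bool) (s : {perm 'I_n}) (i : 'I_n) : nat :=
  readpos D ((s^-1)%g i).

(* pides(PF), as the descent set of sigma^{-1}: i (0-based, meaning the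
   paper's i+1) is a descent iff sigma^{-1}(i) > sigma^{-1}(i+1). *)
Definition pides (n : nat) (D : seq bool) (s : {perm 'I_n}) : {set 'I_n} :=
  [set i : 'I_n | [exists k : 'I_n,
      (val k == (val i).+1) && (sigma_inv D s k < sigma_inv D s i)%N]].

(* Gessel's fundamental quasisymmetric function F_S, S a subset of
   {0,..,n-2} (descent set of the composition), in the n variables
   x_0..x_{n-1}:  sum over i_0 <= i_1 <= ... <= i_{n-1} with i_k < i_{k+1}
   whenever k is in S, of x_{i_0} ... x_{i_{n-1}}. *)
Definition Fund (n : nat) (R : ringType) (S : {set 'I_n}) : {mpoly R[n]} :=
  \sum_(f : {ffun 'I_n -> 'I_n} |
        [forall i : 'I_n, forall k : 'I_n, (val k == (val i).+1) ==>
           ((f i <= f k)%N && ((i \in S) ==> (f i < f k)%N))])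
     \prod_(i : 'I_n) 'X_(f i).

(* LLT_D[X;q] in n variables, coefficients in Z[q] (q = 'X). *)
Definition LLT (n : nat) (D : seq bool) : {mpoly {poly int}[n]} :=
  \sum_(s : {perm 'I_n} | isPF D s)
     ('X ^+ dinv D (fun j => val (s j))) *: Fund _ (pides D s).

Definition LLT1q (n : nat) (D : seq bool) : {mpoly {poly int}[n]} :=
  map_mpoly (fun p : {poly int} => p \Po (1 + 'X)) (LLT n D).

(* dinv(D) = dinv of the parking function PF_D with sigma(PF_D) = n...321,
   i.e. the car of row j is n-1-readpos D j (0-based cars): the first cell
   read gets the largest car, and so on. *)
Definition dinvD (n : nat) (D : seq bool) : nat :=
  dinv D (fun j : 'I_n => (n.-1 - readpos D j)%N).

(* Partitions of n, as weakly decreasing sequences lambda_0 >= ... >= lambda_{n-1}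
   >= 0 of length n (padded with zeros) summing to n. *)
Definition is_partition (n : nat) (mu : {ffun 'I_n -> 'I_n.+1}) : bool :=
  [forall i : 'I_n, forall k : 'I_n, (i <= k)%N ==> (mu k <= mu i)%N] &&
  ((\sum_(i : 'I_n) (mu i : nat))%N == n).

(* e_mu = prod_i e_{mu_i}, with e_0 = 1 (mesym n R 0 = 1). *)
Definition e_part (n : nat) (R : ringType) (mu : {ffun 'I_n -> 'I_n.+1}) : {mpoly R[n]} :=
  \prod_(i : 'I_n) mesym n R (mu i).

From HB Require Import structures.
From mathcomp Require Import all_boot all_order all_algebra all_fingroup.
From mathcomp Require Import mpoly zify.
Set Implicit Arguments. Unset Strict Implicit. Unset Printing Implicit Defensive.
Import Order.TTheory GRing.Theory Order.DefaultProdLexiOrder.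

(* Let L be the linear functional that extracts, by Moebius inversion over the
   monomials x^gamma_B (B a set of descent positions, where F_S contributes
   exactly when S is contained in B), the coefficient of the fundamental with
   full descent set.  Gessel's expansion of e_mu into fundamentals, indexed by
   the words of content mu with their weak descents, has exactly one term with
   full descent set (the weakly decreasing word), so L(e_mu) = 1 and L of the
   right-hand side is the sum of the P_mu.  On the left, sigma(PF)^-1 has every
   descent only for sigma(PF) = n...21, i.e. for the parking function defining
   dinv(D); hence L(LLT_D[X;q]) = q^dinv(D), and L commutes with q -> 1 + q. *)

Lemma card_set_count (T : finType) (P : pred T) : #|[set x | P x]| = count P (enum T).
Proof. by rewrite cardsE cardE size_filter enumT. Qed.

Definition stepwise n T (r : rel T) (f : 'I_n -> T) :=
  forall p k : 'I_n, k = p.+1 :> nat -> r (f p) (f k).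

Lemma sorted_stepwiseP n T (r : rel T) (f : 'I_n -> T) :
  reflect (stepwise r f) (sorted r (map f (enum 'I_n))).
Proof.
case: n f => [|m] f; first by rewrite enum_ord0; apply: ReflectT => p; case: p.
have nth_f i : i < m.+1 -> nth (f ord0) (map f (enum 'I_m.+1)) i = f (inord i).
  move=> lti; have lti_enum : i < size (enum 'I_m.+1) by rewrite size_enum_ord.
  by rewrite (nth_map ord0 _ _ lti_enum); congr f; apply: val_inj; rewrite /= nth_enum_ord ?inordK.
apply: (iffP (sortedP (f ord0))); rewrite size_map size_enum_ord => fr.
  move=> p k kp; have := fr p; rewrite -kp ltn_ord !nth_f ?ltn_ord // !inord_val; exact.
move=> i lti; rewrite !nth_f ?(ltnW lti) //; apply: fr.
by rewrite /= !inordK ?(ltnW lti).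
Qed.

Lemma map_nth_ord_enum n T (x0 : 'I_n -> T) (s : seq T) :
  size s = n -> map (fun p : 'I_n => nth (x0 p) s p) (enum 'I_n) = s.
Proof.
case: s => [|a s] sz; first by case: n / sz x0 => x0; rewrite enum_ord0.
apply: (eq_from_nth (x0 := a)); rewrite size_map size_enum_ord // => i lti.
have lti_enum : i < size (enum 'I_n) by rewrite size_enum_ord.
by rewrite (nth_map (Ordinal lti) _ _ lti_enum) nth_enum_ord //; apply: set_nth_default; rewrite sz.
Qed.

Lemma eq_stepwise_fibres n (T : eqType) (r : rel T) (f g : 'I_n -> T) :
  transitive r -> antisymmetric r -> stepwise r f -> stepwise r g ->
  (forall x, #|[set p | f p == x]| = #|[set p | g p == x]|) -> f =1 g.
Proof.
move=> r_tr r_anti /sorted_stepwiseP f_sorted /sorted_stepwiseP g_sorted fibres.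
have fg : map f (enum 'I_n) = map g (enum 'I_n).
  apply: (sorted_eq r_tr r_anti f_sorted g_sorted); apply/allP => x _.
  by have := fibres x; rewrite /= !count_map !card_set_count !enumT => ->.
move=> p; have := congr1 (nth (f p) ^~ p) fg.
have ltp : p < size (enum 'I_n) by rewrite size_enum_ord.
by rewrite (nth_map p _ _ ltp) (nth_map p _ _ ltp) !nth_ord_enum.
Qed.

Lemma stepwise_gtn_rev n (h : 'I_n -> nat) :
  (forall i, h i < n) -> stepwise (fun a b => b < a) h -> forall i, h i = n.-1 - i.
Proof.
move=> h_lt h_step.
have gap d (i k : 'I_n) : k = i + d :> nat -> h k + d <= h i.
  elim: d k => [|d IHd] k ik; first by rewrite addn0 (val_inj (etrans ik (addn0 _))).
  have ltk : i + d < n by have := ltn_ord k; lia.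
  have := IHd (Ordinal ltk) erefl; have := h_step (Ordinal ltk) k (etrans ik (addnS _ _)).
  by rewrite /=; lia.
move=> i; have [lt0n ltn1n] : 0 < n /\ n.-1 < n by have := ltn_ord i; lia.
have lower : h (Ordinal ltn1n) + (n.-1 - i) <= h i.
  by apply: gap; rewrite /=; have := ltn_ord i; lia.
have upper := gap i (Ordinal lt0n) i erefl.
have := h_lt (Ordinal lt0n); have := ltn_ord i; lia.
Qed.

Local Open Scope ring_scope.

Lemma sum_sign_supsets_eq0 (T : finType) (S U : {set T}) x : x \in U -> x \notin S ->
  \sum_(B : {set T} | (B \subset U) && (S \subset B)) (-1) ^+ #|B| = 0 :> int.
Proof.
move=> xU xNS; pose toggle (B : {set T}) := if x \in B then B :\ x else x |: B.
have toggleK : involutive toggle.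
  move=> B; rewrite /toggle; case xB: (x \in B); first by rewrite setD11 setD1K.
  by rewrite setU11 setU1K ?xB.
have in_toggle B y : y != x -> (y \in toggle B) = (y \in B).
  by move=> yx; rewrite /toggle; case: ifP; rewrite !inE (negbTE yx).
have toggle_sub B : (toggle B \subset U) = (B \subset U).
  apply/subsetP/subsetP => BU y; case: (eqVneq y x) => [-> //| yx].
    by rewrite -(in_toggle B y yx); apply: BU.
  by rewrite (in_toggle B y yx); apply: BU.
have sub_toggle B : (S \subset toggle B) = (S \subset B).
  apply/subsetP/subsetP => SB y yS; have yx : y != x by apply: contraNneq xNS => <-.
    by rewrite -(in_toggle B y yx); apply: SB.
  by rewrite (in_toggle B y yx); apply: SB.
have sign_toggle B : (-1) ^+ #|toggle B| = - (-1) ^+ #|B| :> int.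
  rewrite /toggle; case: ifP => xB; last by rewrite cardsU1 xB exprS mulN1r.
  by rewrite [in RHS](cardsD1 x) xB exprS mulN1r opprK.
set s := (\sum_(B | _) _); have : s = - s.
  rewrite {1}/s (reindex_inj (can_inj toggleK)) /= -sumrN.
  by apply: eq_big => [B|B _]; rewrite ?toggle_sub ?sub_toggle ?sign_toggle.
by lia.
Qed.

Section FullDescentCoefficient.
Variables (n : nat) (R : comNzRingType).
Implicit Types (S B : {set 'I_n}) (f : {ffun 'I_n -> 'I_n}).

Definition fulldes : {set 'I_n} := [set i : 'I_n | i.+1 < n]%N.

Definition compatible S f : bool :=
  [forall i : 'I_n, forall k : 'I_n, (val k == (val i).+1) ==>
     ((f i <= f k)%N && ((i \in S) ==> (f i < f k)%N))].

Lemma compatibleP S f :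
  reflect (forall p k : 'I_n, k = p.+1 :> nat -> (f p <= f k)%N && ((p \in S) ==> (f p < f k)%N))
          (compatible S f).
Proof.
apply: (iffP forallP) => [fS p k kp | fS p]; last first.
  by apply/forallP => k; apply/implyP => /eqP; apply: fS.
by have /forallP/(_ k)/implyP := fS p; apply; rewrite /= kp.
Qed.

Lemma compatible_homo S f : compatible S f -> stepwise (<=%O : rel 'I_n) f.
Proof. by move=> /compatibleP fS p k /fS /andP[]. Qed.

Definition mnmw (f : 'I_n -> 'I_n) : 'X_{1..n} := (\sum_p U_(f p))%MM.

Lemma mnmwE (f : 'I_n -> 'I_n) j : mnmw f j = #|[set p | f p == j]|.
Proof.
rewrite /mnmw mnm_sumE -sum1_card [in RHS]big_mkcond /=; apply: eq_bigr => p _.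
by rewrite mnm1E inE; case: eqP.
Qed.

Lemma mpolyX_mnmw (f : 'I_n -> 'I_n) : 'X_[mnmw f] = \prod_p 'X_(f p) :> {mpoly R[n]}.
Proof. exact: (big_morph (fun m => 'X_[m]) (@mpolyXD _ _) (@mpolyX0 _ _)). Qed.

Lemma FundE S : Fund R S = \sum_(f | compatible S f) 'X_[mnmw f].
Proof. by apply: eq_bigr => f _; rewrite mpolyX_mnmw. Qed.

Lemma eq_mnmw_homo (f g : {ffun 'I_n -> 'I_n}) :
  stepwise (<=%O : rel 'I_n) f -> stepwise (<=%O : rel 'I_n) g -> (mnmw f == mnmw g) = (f == g).
Proof.
move=> f_homo g_homo; apply/eqP/eqP => [fg|-> //]; apply/ffunP.
apply: (eq_stepwise_fibres le_trans le_anti f_homo g_homo) => j.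
by rewrite -!mnmwE fg.
Qed.

Definition nbelow B (p : nat) : nat := count (fun t => t \in [seq nat_of_ord b | b in B]) (iota 0 p).

Lemma nbelow_lt B (p : 'I_n) : (nbelow B p < n)%N.
Proof. by rewrite (leq_ltn_trans _ (ltn_ord p)) // (leq_trans (count_size _ _)) ?size_iota. Qed.

Lemma nbelowS B (p : 'I_n) : nbelow B p.+1 = (nbelow B p + (p \in B))%N.
Proof. by rewrite /nbelow -addn1 iotaD count_cat /= addn0 (mem_map (@ord_inj n)) mem_enum. Qed.

Definition stdword B : {ffun 'I_n -> 'I_n} := [ffun p => Ordinal (nbelow_lt B p)].

Lemma stdwordS B (p k : 'I_n) : k = p.+1 :> nat -> stdword B k = (stdword B p + (p \in B))%N :> nat.
Proof. by move=> kp; rewrite !ffunE /= kp nbelowS. Qed.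

Lemma stdword_homo B : stepwise (<=%O : rel 'I_n) (stdword B).
Proof. by move=> p k kp; rewrite leEord (stdwordS B kp) leq_addr. Qed.

Lemma compatible_stdword S B : S \subset fulldes -> compatible S (stdword B) = (S \subset B).
Proof.
move=> Sfull; apply/compatibleP/subsetP => [stdS i iS | SB p k kp].
  have iSn : (i.+1 < n)%N by have := subsetP Sfull i iS; rewrite inE.
  have /andP[_] := stdS i (Ordinal iSn) erefl; rewrite iS (@stdwordS B i (Ordinal iSn)) //=.
  by case: (i \in B); rewrite ?addn0 ?ltnn.
by rewrite (stdwordS B kp) leq_addr /=; apply/implyP => /SB ->; rewrite addn1.
Qed.

Lemma coef_Fund_stdword S B : S \subset fulldes ->
  (Fund R S)@_(mnmw (stdword B)) = (S \subset B)%:R.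
Proof.
move=> Sfull; rewrite FundE raddf_sum /= -(compatible_stdword B Sfull).
have mnmw_std f : compatible S f -> (mnmw f == mnmw (stdword B)) = (f == stdword B).
  by move=> /compatible_homo f_homo; apply: eq_mnmw_homo f_homo (stdword_homo B).
case: (boolP (compatible S (stdword B))) => stdS.
  rewrite (bigD1 (stdword B)) //= mcoeffX eqxx big1 ?addr0 // => f /andP[fS fB].
  by rewrite mcoeffX mnmw_std // (negbTE fB).
rewrite big1 // => f fS; rewrite mcoeffX mnmw_std //.
by case: eqP => // fB; rewrite -fB fS in stdS.
Qed.

Definition fullcoef (F : {mpoly R[n]}) : R :=
  (-1) ^+ #|fulldes| * \sum_(B : {set 'I_n} | B \subset fulldes) (-1) ^+ #|B| * F@_(mnmw (stdword B)).

Lemma fullcoef_Fund S : S \subset fulldes -> fullcoef (Fund R S) = (S == fulldes)%:R.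
Proof.
move=> Sfull; rewrite /fullcoef; under eq_bigr => B _ do rewrite coef_Fund_stdword //.
case: (eqVneq S fulldes) => [->|neS].
  rewrite (bigD1 fulldes) //= subxx big1 ?addr0 ?eqxx ?signrMK // => B /andP[Bfull neB].
  rewrite (_ : fulldes \subset B = false) ?mulr0 //.
  by apply: contraNF neB => fullB; rewrite eqEsubset Bfull.
have /properP[_ [x xfull xNS]] : S \proper fulldes by rewrite properEneq neS.
have sum0 : \sum_(B : {set 'I_n} | (B \subset fulldes) && (S \subset B)) (-1) ^+ #|B| = 0 :> R.
  have := congr1 (fun z : int => z%:~R : R) (sum_sign_supsets_eq0 xfull xNS).
  rewrite /= rmorph_sum mulr0z => sum0; rewrite -[RHS]sum0.
  by apply: eq_bigr => B _; rewrite rmorph_sign.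
rewrite big_mkcondr /= in sum0; rewrite -[RHS](mulr0 ((-1) ^+ #|fulldes|)) -[in RHS]sum0.
by congr (_ * _); apply: eq_bigr => B _; case: (S \subset B); rewrite ?mulr1 ?mulr0.
Qed.

Lemma fullcoef_is_linear : linear_for *%R fullcoef.
Proof.
move=> a F G; rewrite /fullcoef mulrCA -mulrDr; congr (_ * _).
rewrite mulr_sumr -big_split /=.
by apply: eq_bigr => B _; rewrite mcoeffD mcoeffZ mulrDr mulrCA.
Qed.

HB.instance Definition _ := GRing.isLinear.Build R {mpoly R[n]} R *%R fullcoef fullcoef_is_linear.

Lemma fullcoef_sum I (r : seq I) (P : pred I) (F : I -> {mpoly R[n]}) :
  fullcoef (\sum_(i <- r | P i) F i) = \sum_(i <- r | P i) fullcoef (F i).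
Proof. exact: raddf_sum. Qed.

Lemma fullcoefZ a (F : {mpoly R[n]}) : fullcoef (a *: F) = a * fullcoef F.
Proof. exact: linearZ_LR. Qed.

End FullDescentCoefficient.

Lemma fullcoef_map_mpoly n (R S : comNzRingType) (f : {additive R -> S}) (F : {mpoly R[n]}) :
  fullcoef (map_mpoly f F) = f (fullcoef F).
Proof.
have f_sign k x : f ((-1) ^+ k * x) = (-1) ^+ k * f x.
  by rewrite -[in LHS]signr_odd -[in RHS]signr_odd !mulr_sign; case: (odd k); rewrite ?raddfN.
rewrite /fullcoef f_sign raddf_sum; congr (_ * _); apply: eq_bigr => B _.
by rewrite f_sign mcoeff_map_mpoly.
Qed.

Section ElementaryExpansion.
Variables (n : nat) (R : comNzRingType) (mu : 'I_n -> nat).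
Local Notation word := {ffun 'I_n -> 'I_n}.
Local Notation family := {ffun 'I_n -> {set 'I_n}}.
Implicit Types (w f : word) (x : word * word) (H : family).

Definition has_content w := [forall i, #|[set p | w p == i]| == mu i].

Definition nonasc w : {set 'I_n} :=
  [set i | [exists k : 'I_n, (val k == (val i).+1) && (w k <= w i)%N]].

Lemma nonasc_succ w (p k : 'I_n) : k = p.+1 :> nat -> (p \in nonasc w) = (w k <= w p)%N.
Proof.
move=> kp; rewrite inE; apply/existsP/idP => [[k' /andP[/eqP k'p]]|]; last first.
  by exists k; rewrite /= kp eqxx.
by have -> : k = k' by apply: val_inj; rewrite /= kp k'p.
Qed.

Lemma nonasc_sub w : nonasc w \subset fulldes n.
Proof. by apply/subsetP => i; rewrite !inE => /existsP[k /andP[/eqP /= <- _]]. Qed.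

(* The variable index comes first, so that Gessel pairs are exactly the pairs
   whose letters increase lexicographically. *)
Definition letters x : seq ('I_n * 'I_n) := [seq (x.2 p, x.1 p) | p <- enum 'I_n].

Lemma compatible_nonasc_sorted w f : compatible (nonasc w) f = sorted <%O (letters (w, f)).
Proof.
apply/compatibleP/sorted_stepwiseP => wf p k kp; move: {wf}(wf p k kp);
  by rewrite (nonasc_succ _ kp) ltxi_pair leEord ltEord -implybNN -leqNgt -ltnNge.
Qed.

Definition gessel_pair x := has_content x.1 && compatible (nonasc x.1) x.2.

Definition mu_family H := [forall i, #|H i| == mu i].

Definition family_mono H : {mpoly R[n]} := \prod_i \prod_(j in H i) 'X_j.

Definition family_of x : family := [ffun i => x.2 @: [set p | x.1 p == i]].

Definition family_seq H := sort <=%O (enum [set ji | ji.1 \in H ji.2]).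

Definition pair_of H : word * word :=
  ([ffun p => (nth (p, p) (family_seq H) p).2], [ffun p => (nth (p, p) (family_seq H) p).1]).

Lemma fibre_inj x i : uniq (letters x) -> {in [set p | x.1 p == i] &, injective x.2}.
Proof.
move=> /injectiveP xinj p q; rewrite !inE => /eqP xpi /eqP xqi fpq.
by apply: xinj; rewrite /= xpi xqi fpq.
Qed.

Lemma gessel_pairE x : gessel_pair x = mu_family (family_of x) && sorted <%O (letters x).
Proof.
case: x => w f; rewrite /gessel_pair compatible_nonasc_sorted /=.
case: (boolP (sorted _ _)) => [/(sorted_uniq lt_trans ltxx) xuniq|]; rewrite ?andbF //.
rewrite !andbT; apply: eq_forallb => i; rewrite ffunE card_in_imset //.
exact: (fibre_inj (x := (w, f))).
Qed.

Lemma family_mono_of x : gessel_pair x -> family_mono (family_of x) = 'X_[mnmw x.2].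
Proof.
rewrite gessel_pairE => /andP[_ /(sorted_uniq lt_trans ltxx) xuniq].
rewrite /family_mono mpolyX_mnmw [RHS](partition_big x.1 predT) //=.
apply: eq_bigr => i _; rewrite ffunE big_imset /=; last exact: fibre_inj.
by apply: eq_bigl => p; rewrite inE.
Qed.

Lemma family_seq_of x : gessel_pair x -> family_seq (family_of x) = letters x.
Proof.
rewrite gessel_pairE => /andP[_ xsorted].
apply: (sorted_eq le_trans le_anti (sort_sorted le_total _)).
  by apply: sub_sorted xsorted => a b /ltW.
rewrite perm_sort uniq_perm ?enum_uniq ?(sorted_uniq lt_trans ltxx xsorted) // => ji.
rewrite mem_enum inE ffunE; apply/imsetP/mapP => [[p]|[p _ ->]]; last by exists p; rewrite ?inE.
by rewrite inE => /eqP xpi fpj; exists p; rewrite ?mem_enum // -fpj xpi -surjective_pairing.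
Qed.

Lemma family_ofK x : gessel_pair x -> pair_of (family_of x) = x.
Proof.
move=> xG; rewrite /pair_of (family_seq_of xG); case: x xG => w f _ /=.
by congr pair; apply/ffunP => p; rewrite ffunE (nth_map p) ?nth_ord_enum ?size_enum_ord.
Qed.

Lemma mem_family_seq H ji : (ji \in family_seq H) = (ji.1 \in H ji.2).
Proof. by rewrite mem_sort mem_enum inE. Qed.

Hypothesis mu_sum : (\sum_i mu i)%N = n.

Lemma size_family_seq H : mu_family H -> size (family_seq H) = n.
Proof.
move=> /forallP Hmu; rewrite size_sort -cardE -[in RHS]mu_sum.
rewrite (eq_bigr (fun i => \sum_(j in H i) 1)%N) => [|i _]; last by rewrite sum1_card (eqP (Hmu i)).
rewrite (exchange_big_dep predT) //= pair_big_dep sum1dep_card.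
by apply: eq_card => ji; rewrite !inE.
Qed.

Lemma letters_pair_of H : mu_family H -> letters (pair_of H) = family_seq H.
Proof.
move=> /size_family_seq sz; rewrite -[RHS](map_nth_ord_enum (fun p => (p, p)) sz).
by apply: eq_map => p; rewrite !ffunE -surjective_pairing.
Qed.

Lemma pair_ofK H : mu_family H -> family_of (pair_of H) = H.
Proof.
move=> Hmu; have sz := size_family_seq Hmu; apply/ffunP => i; apply/setP => j; rewrite ffunE.
apply/imsetP/idP => [[p]|jH].
  rewrite inE ffunE => /eqP pi ->; rewrite ffunE.
  have : nth (p, p) (family_seq H) p \in family_seq H by rewrite mem_nth // sz.
  by rewrite mem_family_seq pi.
have lt_ji : (index (j, i) (family_seq H) < n)%N.
  by rewrite -[in X in (_ < X)%N]sz index_mem mem_family_seq.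
by exists (Ordinal lt_ji); rewrite ?inE !ffunE /= nth_index ?mem_family_seq.
Qed.

Lemma gessel_pair_of H : mu_family H -> gessel_pair (pair_of H).
Proof.
move=> Hmu; rewrite gessel_pairE pair_ofK // Hmu letters_pair_of //.
by rewrite lt_sorted_uniq_le sort_uniq enum_uniq sort_sorted //; exact: le_total.
Qed.

Lemma gessel_pair_familyE x :
  mu_family (family_of x) && (pair_of (family_of x) == x) = gessel_pair x.
Proof.
apply/andP/idP => [[Hmu /eqP <-]|xG]; first exact: gessel_pair_of.
by move: (xG); rewrite gessel_pairE => /andP[-> _]; rewrite family_ofK.
Qed.

Lemma prod_mesym_Fund : \prod_i mesym n R (mu i) = \sum_(w | has_content w) Fund R (nonasc w).
Proof.
rewrite /mesym bigA_distr_big_dep.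
transitivity (\sum_(H | mu_family H) family_mono H).
  by apply: eq_bigl => H; apply/familyP/forallP => Hmu i; apply: Hmu.
rewrite (reindex_onto family_of pair_of pair_ofK).
under eq_bigl => x do rewrite gessel_pair_familyE.
under eq_bigr => x xG do rewrite family_mono_of //.
under [RHS]eq_bigr => w _ do rewrite FundE.
by rewrite pair_big_dep.
Qed.

Definition decreasing_seq := sort >=%O (flatten [seq nseq (mu i) i | i <- enum 'I_n]).

Definition decreasing_word : word := [ffun p => nth p decreasing_seq p].

Lemma size_decreasing_seq : size decreasing_seq = n.
Proof.
rewrite size_sort size_flatten /shape -map_comp sumnE big_map -[RHS]mu_sum big_enum /=.
by apply: eq_bigr => i _; exact: size_nseq.
Qed.

Lemma count_decreasing_seq i : count_mem i decreasing_seq = mu i.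
Proof.
have /seq.permP -> : perm_eq decreasing_seq (flatten [seq nseq (mu i) i | i <- enum 'I_n]).
  by rewrite perm_sort.
rewrite count_flatten -map_comp sumnE big_map big_enum /=.
rewrite (bigD1 i) //= count_nseq /= eqxx mul1n big1 ?addn0 // => j ji.
by rewrite count_nseq /= (negbTE ji).
Qed.

Lemma has_content_decreasing : has_content decreasing_word.
Proof.
apply/forallP => i; apply/eqP; under eq_finset => p do rewrite ffunE.
rewrite card_set_count -(count_map (fun p : 'I_n => nth p decreasing_seq p) (pred1 i)).
by rewrite map_nth_ord_enum ?size_decreasing_seq // count_decreasing_seq.
Qed.

Lemma decreasing_word_homo : stepwise (>=%O : rel 'I_n) decreasing_word.
Proof.
move=> p k kp; have ltk : (p.+1 < size decreasing_seq)%N by rewrite size_decreasing_seq -kp.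
rewrite !ffunE (set_nth_default p k) ?kp //.
by have /sortedP := sort_sorted ge_total (flatten [seq nseq (mu i) i | i <- enum 'I_n]); apply.
Qed.

Lemma nonasc_full_decreasing w :
  has_content w -> (nonasc w == fulldes n) = (w == decreasing_word).
Proof.
move=> wmu; apply/eqP/eqP => [wfull|->]; last first.
  apply/eqP; rewrite eqEsubset nonasc_sub; apply/subsetP => i; rewrite inE => lti.
  by rewrite (nonasc_succ _ (k := Ordinal lti)) //; apply: decreasing_word_homo.
apply/ffunP; apply: (eq_stepwise_fibres ge_trans ge_anti _ decreasing_word_homo) => [p k kp|j].
  have : p \in nonasc w by rewrite wfull inE -kp ltn_ord.
  by rewrite (nonasc_succ _ kp).
by rewrite (eqP (forallP wmu j)) (eqP (forallP has_content_decreasing j)).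
Qed.

Lemma fullcoef_prod_mesym : fullcoef (\prod_i mesym n R (mu i)) = 1.
Proof.
rewrite prod_mesym_Fund fullcoef_sum.
under eq_bigr => w wmu do rewrite fullcoef_Fund ?nonasc_sub // nonasc_full_decreasing //.
rewrite (bigD1 decreasing_word) ?has_content_decreasing //= eqxx big1 ?addr0 //.
by move=> w /andP[_ /negbTE ->].
Qed.

End ElementaryExpansion.

Section ReadingOrder.
Variables (n : nat) (D : seq bool).
Implicit Types (i j k : 'I_n) (s : {perm 'I_n}).

Definition read_key j : nat * nat := (area D j, nat_of_ord j).

Lemma readposE j : readpos D j = #|[set k | (read_key j < read_key k)%O]|.
Proof.
apply: eq_card => k; rewrite !inE ltxi_pair /= !leEnat ltEnat.
by case: ltngtP => //=; rewrite ?andbF ?andbT // => ->; rewrite eqxx.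
Qed.

Lemma read_key_inj : injective read_key.
Proof. by move=> j k [_ /ord_inj]. Qed.

Lemma readpos_lt j : (readpos D j < n)%N.
Proof.
rewrite readposE -[X in (_ < X)%N]card_ord -cardsT; apply: proper_card; apply/properP.
by split; [exact: subsetT | exists j; rewrite !inE ?ltxx].
Qed.

Lemma readpos_key_lt j k : (read_key j < read_key k)%O -> (readpos D k < readpos D j)%N.
Proof.
move=> jk; rewrite !readposE; apply: proper_card; apply/properP; split.
  by apply/subsetP => l; rewrite !inE => /(lt_trans jk).
by exists k; rewrite !inE ?ltxx.
Qed.

Lemma readpos_inj : injective (@readpos n D).
Proof.
move=> j k eqjk; apply: read_key_inj; apply/eqP; apply: contraT; rewrite neq_lt.
by case/orP => /readpos_key_lt; rewrite eqjk ltnn.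
Qed.

Lemma reversed_car_lt j : (n.-1 - readpos D j < n)%N.
Proof. by have := ltn_ord j; lia. Qed.

Definition reversed_car j : 'I_n := Ordinal (reversed_car_lt j).

Lemma reversed_car_inj : injective reversed_car.
Proof.
move=> j k /(congr1 val) /= eqjk; apply: readpos_inj.
by have := readpos_lt j; have := readpos_lt k; lia.
Qed.

Definition reversed_pf : {perm 'I_n} := perm reversed_car_inj.

Lemma reversed_pfE j : reversed_pf j = (n.-1 - readpos D j)%N :> nat.
Proof. by rewrite permE. Qed.

Lemma isPF_reversed : isPF D reversed_pf.
Proof.
apply/forallP => j; apply/forallP => k; apply/implyP => /andP[jk /eqP xjk].
have /readpos_key_lt : (read_key j < read_key k)%O.
  by rewrite ltxi_pair leEnat /area xjk leq_sub2r ?(ltnW jk) //=; apply/implyP.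
have := reversed_pfE j; have := reversed_pfE k.
by have := readpos_lt j; have := readpos_lt k; lia.
Qed.

Lemma sigma_inv_reversed i : sigma_inv D reversed_pf i = (n.-1 - i)%N.
Proof.
rewrite /sigma_inv; set j := (reversed_pf^-1)%g i.
have : reversed_pf j = i :> nat by rewrite /j permKV.
by rewrite reversed_pfE; have := readpos_lt j; have := ltn_ord i; lia.
Qed.

Lemma pides_sub s : pides D s \subset fulldes n.
Proof. by apply/subsetP => i; rewrite !inE => /existsP[k /andP[/eqP /= <- _]]. Qed.

Lemma pides_succ s i k : k = i.+1 :> nat ->
  (i \in pides D s) = (sigma_inv D s k < sigma_inv D s i)%N.
Proof.
move=> ki; rewrite inE; apply/existsP/idP => [[k' /andP[/eqP k'i]]|]; last first.
  by exists k; rewrite /= ki eqxx.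
by have -> : k = k' by apply: val_inj; rewrite /= ki k'i.
Qed.

Lemma pides_full s : (pides D s == fulldes n) = (s == reversed_pf).
Proof.
apply/eqP/eqP => [sfull|->]; last first.
  apply/eqP; rewrite eqEsubset pides_sub; apply/subsetP => i; rewrite inE => lti.
  rewrite (pides_succ _ (k := Ordinal lti)) // !sigma_inv_reversed /=.
  by have := ltn_ord i; lia.
have sigma_rev : forall i, sigma_inv D s i = (n.-1 - i)%N.
  apply: stepwise_gtn_rev => [i|i k ki]; first exact: readpos_lt.
  by rewrite -(pides_succ _ ki) sfull inE -ki ltn_ord.
apply/permP => j; apply: val_inj; have := sigma_rev (s j).
by rewrite /sigma_inv permK /=; have := reversed_pfE j; have := ltn_ord (s j); lia.
Qed.

Lemma eq_dinv (c c' : 'I_n -> nat) : c =1 c' -> dinv D c = dinv D c'.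
Proof. by move=> cc'; apply: eq_card => jk; rewrite !inE !cc'. Qed.

Lemma fullcoef_LLT : fullcoef (LLT n D) = 'X ^+ dinvD n D.
Proof.
rewrite fullcoef_sum (bigD1 reversed_pf) ?isPF_reversed //= big1 ?addr0 => [|s /andP[_ sNrev]].
  by rewrite fullcoefZ fullcoef_Fund ?pides_sub // pides_full eqxx mulr1 (eq_dinv reversed_pfE).
by rewrite fullcoefZ fullcoef_Fund ?pides_sub // pides_full (negbTE sNrev) mulr0.
Qed.

End ReadingOrder.

Theorem proposition3p1 (n : nat) (D : seq bool)
    (P : {ffun 'I_n -> 'I_n.+1} -> {poly int}) :
  is_dyck n D ->
  LLT1q n D = \sum_(mu | is_partition mu) P mu *: e_part _ mu ->
  \sum_(mu | is_partition mu) P mu = (1 + 'X) ^+ dinvD n D.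
Proof.
move=> _ /(congr1 (@fullcoef n _)).
rewrite fullcoef_map_mpoly fullcoef_LLT /= rmorphXn /= comp_polyX fullcoef_sum => ->.
apply: eq_bigr => mu /andP[_ /eqP mu_sum].
by rewrite fullcoefZ fullcoef_prod_mesym ?mulr1.
Qed.
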